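(* For all integers $k\ge1$ and $t\ge2$, $\Pr_{G\sim G(n,1/2)}[\theta^t(G)\not\models\mathrm{EA}^t_k]=\mathrm{negl}(n)$.
   Context: $G(n,1/2)$ is the uniform distribution over simple graphs on $[n]$. For a graph $G$, $\theta^t(G)$ is the $t$-hypergraph on $V(G)$ defined by the $\mathrm{FO}[\oplus]$ formula $\theta^t(x_1,\dots,x_t)=\oplus y\,\bigwedge_{i=1}^t E(y,x_i)$: a $t$-element set $\{v_1,\dots,v_t\}$ is a hyperedge iff the number of vertices $y$ adjacent to all of $v_1,\dots,v_t$ is odd. A $t$-hypergraph satisfies $\mathrm{EA}^t_k$ if for every vertex set $S$ of size $k$ and every $T\subseteq\binom{S}{t-1}$ there exists $v\notin S$ such that for every $\{s_1,\dots,s_{t-1}\}\in\binom{S}{t-1}$, $\{s_1,\dots,s_{t-1},v\}$ is a hyperedge iff $\{s_1,\dots,s_{t-1}\}\in T$. Negligible means eventually below $1/p(n)$ for every polynomial $p$. *)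

From mathcomp Require Import all_boot all_order all_algebra.
Set Implicit Arguments. Unset Strict Implicit. Unset Printing Implicit Defensive.
Import GRing.Theory Num.Theory.

(* A simple graph on [n] = 'I_n is represented by its edge set: a set of
   2-element subsets of 'I_n. *)
Definition is_graph (n : nat) (E : {set {set 'I_n}}) : bool :=
  [forall e in E, #|e| == 2].

(* The sample space of G(n,1/2): all simple graphs on 'I_n (uniform). *)
Definition graphs (n : nat) : {set {set {set 'I_n}}} :=
  [set E | is_graph E].

Definition adj (n : nat) (E : {set {set 'I_n}}) (y x : 'I_n) : bool :=
  [set y; x] \in E.

Definition theta (n t : nat) (E : {set {set 'I_n}}) : {set {set 'I_n}} :=
  [set S : {set 'I_n} | (#|S| == t) &&
     odd #|[set y : 'I_n | [forall x in S, adj E y x]]|].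

Definition binom_sets (n : nat) (S : {set 'I_n}) (m : nat) : {set {set 'I_n}} :=
  [set U in powerset S | #|U| == m].

Definition EA (n t k : nat) (H : {set {set 'I_n}}) : bool :=
  [forall S : {set 'I_n}, (#|S| == k) ==>
    [forall T : {set {set 'I_n}}, (T \subset binom_sets S t.-1) ==>
      [exists v : 'I_n, (v \notin S) &&
        [forall U in binom_sets S t.-1, ((v |: U) \in H) == (U \in T)]]]].

Definition fail_prob (t k n : nat) : rat :=
  (#|[set E in graphs n | ~~ @EA n t k (@theta n t E)]|%:R / #|graphs n|%:R)%R.

(* negligible: eventually below 1/p(n) for every polynomial p
   (that is eventually positive, so that 1/p(n) makes sense). *)
Definition negligible (f : nat -> rat) : Prop :=
  forall p : {poly rat},
    (exists N, forall n, (N <= n)%N -> (0 < p.[n%:R])%R) ->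
    exists N, forall n, (N <= n)%N -> (f n < (p.[n%:R])^-1)%R.

From mathcomp Require Import all_boot all_order all_algebra zify ring lra.
Set Implicit Arguments. Unset Strict Implicit. Unset Printing Implicit Defensive.
Import Order.TTheory GRing.Theory Num.Theory.

(* A graph on 'I_n is a subset of the set [pairs] of 2-subsets
   of 'I_n, so probabilities are proportions of subsets of [pairs].

   Fix S (|S| = k) and T, and split the complement of S into disjoint A, B of
   size at least h = (n - k)/2.  If some (t-1)-subset U of S is the trace on S
   of no neighbourhood of a vertex of B (probability <= 2^k q^|B|, where
   q = 1 - 2^-(2^k)), we give up.  Otherwise choose for every U a vertex y_U
   of B with trace U; for each v in A, toggling the edges v y_U fixes the
   parity of the common neighbourhood of v + U independently for each U, so
   some setting of these <= 2^k edges makes v a witness for (S, T).  As the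
   edge stars of distinct v in A are disjoint, all v in A fail with
   probability <= q^|A|.  A union bound over S and T gives a failure
   probability <= C(n,k) 2^(2^k) (1 + 2^k) q^h, and such a bound is
   negligible since geometric decay beats every polynomial. *)

(* Counting subsets: the union bound and density estimates for properties of
   subsets E of a finite set that are controlled by disjoint blocks of
   coordinates. *)
Section SubsetCounting.
Variable X : finType.

Lemma card_set_filter (T : finType) (A : {set T}) (P : pred T) :
  #|[set x in A | P x]| = \sum_(x in A) (P x : nat).
Proof.
rewrite -sum1_card big_mkcond /= [RHS]big_mkcond /=.
by apply: eq_bigr => x _; rewrite inE; case: (x \in A); case: (P x).
Qed.

Lemma union_bound (T I : finType) (A : {set T}) (p : pred I) (P : pred T)
    (Q : I -> pred T) :
  (forall x, x \in A -> P x -> exists i, p i && Q i x) ->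
  (#|[set x in A | P x]| <= \sum_(i | p i) #|[set x in A | Q i x]|)%N.
Proof.
move=> cover; rewrite card_set_filter.
rewrite (eq_bigr _ (fun i _ => card_set_filter A (Q i))) exchange_big /=.
apply: leq_sum => x xA; case Px: (P x) => //.
have [i /andP [pi Qix]] := cover x xA Px.
by rewrite (bigD1 i) //= Qix.
Qed.

Lemma setU_setD_block (D J R Y : {set X}) : R \subset D :\: J -> Y \subset J ->
  (R :|: Y) :\: J = R.
Proof.
move=> sR sY; have /eqP YJ0 : Y :\: J == set0 by rewrite setD_eq0.
rewrite setDUl YJ0 setU0 (setDidPl _) //.
by rewrite disjoints_subset (subset_trans sR) // setDE subsetIr.
Qed.

Lemma card_powerset_split (J W : {set X}) (P : pred {set X}) : W \subset J ->
  #|[set Y in powerset J | P Y]| =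
  \sum_(R in powerset (J :\: W)) #|[set Y in powerset W | P (R :|: Y)]|.
Proof.
move=> sWJ.
rewrite card_set_filter;
rewrite (partition_big (fun Y => Y :\: W) (mem (powerset (J :\: W)))) /=;
  last by move=> Y; rewrite !inE => sYJ; apply: setSD.
apply: eq_bigr => R; rewrite inE => sRJW.
have RW0 : R :&: W = set0.
  by apply/eqP; rewrite setI_eq0 disjoints_subset (subset_trans sRJW) // setDE subsetIr.
rewrite card_set_filter (reindex_onto (fun Y => R :|: Y) (fun Y => Y :&: W)) /=;
  last by move=> Y /andP [_ /eqP <-]; apply/setP => x; rewrite !inE;
          case: (x \in W); case: (x \in Y).
apply: eq_bigl => Y; rewrite !inE.
case sYW: (Y \subset W); last first.
  by apply/negbTE/negP => /andP [_ /eqP YW]; move: sYW; rewrite -YW subsetIr.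
have -> : (R :|: Y) :&: W == Y by rewrite setIUl RW0 set0U; apply/eqP/setIidPl.
have -> : (R :|: Y) :\: W == R by rewrite (setU_setD_block sRJW sYW).
rewrite !andbT subUset (subset_trans sRJW (subsetDl _ _)) /=.
exact: subset_trans sYW sWJ.
Qed.

Local Open Scope ring_scope.

(* If whatever happens outside W, some choice inside W falsifies P, then at
   least one subset of W in every fibre fails P, so P has density at most
   1 - 2^-|W| among the subsets of J. *)
Lemma escapable_density (J W : {set X}) (P : pred {set X}) : W \subset J ->
  (forall R : {set X}, R \subset J :\: W ->
     exists Y : {set X}, (Y \subset W) && ~~ P (R :|: Y)) ->
  (#|[set Y in powerset J | P Y]|%:R : rat) <= (1 - (2 ^+ #|W|)^-1) * 2 ^+ #|J|.
Proof.
move=> sWJ escape; rewrite (card_powerset_split P sWJ).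
have cardJ : #|J| = (#|J :\: W| + #|W|)%N.
  by rewrite cardsD (setIidPr sWJ) subnK // subset_leq_card.
have fibre_le R : R \in powerset (J :\: W) ->
    (#|[set Y in powerset W | P (R :|: Y)]| <= (2 ^ #|W|).-1)%N.
  rewrite inE => /escape [Y /andP [sYW nPY]].
  rewrite -ltnS prednK ?expn_gt0 // -card_powerset; apply: proper_card.
  apply/properP; split; first by apply/subsetP => Z; rewrite inE => /andP [].
  by exists Y; rewrite !inE ?sYW // (negbTE nPY).
apply: (@le_trans _ _ ((\sum_(R in powerset (J :\: W)) (2 ^ #|W|).-1)%N%:R)).
  by rewrite ler_nat; apply: leq_sum.
rewrite sum_nat_const card_powerset natrM -subn1 natrB ?expn_gt0 //.
by rewrite cardJ !natrX exprD mulrBl mul1r mulrBr mulrCA mulVf ?mulr1 ?expf_neq0.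
Qed.

Definition block_density_le (D J : {set X}) (P : pred {set X}) (c : rat) :=
  forall R : {set X}, R \subset D :\: J ->
    #|[set Y in powerset J | P (R :|: Y)]|%:R <= c * 2 ^+ #|J|.

Lemma block_density_step (D J : {set X}) (P Q : pred {set X}) (c : rat) :
  J \subset D -> (forall E : {set X}, Q E = Q (E :\: J)) -> block_density_le D J P c ->
  (#|[set E in powerset D | P E && Q E]|%:R : rat) <=
    c * #|[set E in powerset D | Q E]|%:R.
Proof.
move=> sJD Q_indep Pc.
rewrite (card_powerset_split (fun E => P E && Q E) sJD) (card_powerset_split Q sJD).
rewrite !natr_sum mulr_sumr; apply: ler_sum => R; rewrite inE => sR.
have QRY (Y : {set X}) : Y \subset J -> Q (R :|: Y) = Q R.
  by move=> sY; rewrite Q_indep (setU_setD_block sR sY).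
case QR: (Q R).
  have <- : [set Y in powerset J | P (R :|: Y)] =
            [set Y in powerset J | P (R :|: Y) && Q (R :|: Y)].
    by apply/setP => Y; rewrite !inE; apply: andb_id2l => sY; rewrite QRY ?QR ?andbT.
  have -> : [set Y in powerset J | Q (R :|: Y)] = powerset J.
    by apply/setP => Y; rewrite !inE andbC; apply: andb_idl => sY; rewrite QRY.
  by rewrite card_powerset natrX; apply: Pc.
have noQ Y : (Y \in powerset J) && Q (R :|: Y) = false.
  by apply/negbTE/negP; rewrite inE => /andP [sY]; rewrite QRY ?QR.
rewrite (_ : [set Y in powerset J | P (R :|: Y) && Q (R :|: Y)] = set0); last first.
  by apply/setP => Y; rewrite in_set andbCA noQ andbF inE.
rewrite (_ : [set Y in powerset J | Q (R :|: Y)] = set0); last first.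
  by apply/setP => Y; rewrite in_set noQ inE.
by rewrite cards0 mulr0.
Qed.

Lemma independent_blocks_bound (I : eqType) (D : {set X}) (J : I -> {set X})
    (F : I -> pred {set X}) (c : rat) (s : seq I) : 0 <= c -> uniq s ->
  (forall i, i \in s -> J i \subset D) ->
  (forall i j, i \in s -> j \in s -> i != j ->
     forall E : {set X}, F i E = F i (E :\: J j)) ->
  (forall i, i \in s -> block_density_le D (J i) (F i) c) ->
  (#|[set E in powerset D | all (fun i => F i E) s]|%:R : rat)
    <= c ^+ size s * 2 ^+ #|D|.
Proof.
move=> c0; elim: s => [|i s IH] /=.
  move=> _ _ _ _; rewrite expr0 mul1r -natrX -card_powerset.
  by rewrite ler_nat subset_leq_card //; apply/subsetP => E; rewrite inE => /andP [].
move=> /andP [i_s uniq_s] sJD F_indep Fc.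
have s_indep E : all (fun j => F j E) s = all (fun j => F j (E :\: J i)) s.
  apply: eq_in_all => j js; apply: F_indep; rewrite ?inE ?js ?eqxx ?orbT //.
  by apply/eqP => ji; move: i_s; rewrite -ji js.
apply: le_trans (block_density_step _ s_indep (Fc i (mem_head _ _))) _.
  by apply: sJD; rewrite inE eqxx.
rewrite exprS -mulrA ler_wpM2l //; apply: IH => // [j js|j j' js j's|j js].
- by apply: sJD; rewrite inE js orbT.
- by apply: F_indep; rewrite inE ?js ?j's orbT.
- by apply: Fc; rewrite inE js orbT.
Qed.

Lemma halve_set (C : {set X}) : exists A B : {set X},
  [/\ A \subset C, B \subset C, [disjoint A & B],
      (#|C|./2 <= #|A|)%N & (#|C|./2 <= #|B|)%N].
Proof.
set cs := enum C; set h := #|C|./2.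
have ucs : uniq cs by apply: enum_uniq.
have h_le : (h.*2 <= size cs)%N by rewrite -cardE -geq_half_double.
exists [set x in take h cs], [set x in drop h cs]; split.
- by apply/subsetP => x; rewrite inE => /mem_take; rewrite mem_enum.
- by apply/subsetP => x; rewrite inE => /mem_drop; rewrite mem_enum.
- rewrite -setI_eq0; apply/eqP/setP => x; rewrite !inE.
  have : uniq (take h cs ++ drop h cs) by rewrite cat_take_drop.
  rewrite cat_uniq => /and3P [_ /hasPn disj _].
  by apply/negP => /andP [xT xD]; move: (disj x xD); rewrite /= xT.
- rewrite cardsE (card_uniqP (take_uniq _ ucs)) size_takel //.
  by apply: leq_trans h_le; rewrite -addnn leq_addr.
rewrite cardsE (card_uniqP (drop_uniq _ ucs)) size_drop leq_subRL.
  by rewrite addnn.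
by apply: leq_trans h_le; rewrite -addnn leq_addr.
Qed.

End SubsetCounting.

Local Open Scope ring_scope.

(* qk k = 1 - 2^-(2^k) bounds the density of a property that can be escaped
   by setting at most 2^k coordinates (see escapable_density). *)
Definition qk (k : nat) : rat := 1 - (2 ^+ (2 ^ k))^-1.

Lemma qk_mono k w : (w <= 2 ^ k)%N -> 1 - (2 ^+ w)^-1 <= qk k.
Proof.
move=> wk; rewrite /qk lerD2l lerN2 lef_pV2 ?posrE ?exprn_gt0 //.
exact: ler_weXn2l.
Qed.

Lemma qk_gt0 k : 0 < qk k.
Proof.
by rewrite /qk subr_gt0 invf_lt1 ?exprn_gt0 // exprn_egt1 // -lt0n expn_gt0.
Qed.

Lemma qk_ge0 k : 0 <= qk k.
Proof. exact: ltW (qk_gt0 k). Qed.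

Lemma qk_lt1 k : qk k < 1.
Proof. by rewrite /qk ltrBlDr ltrDl invr_gt0 exprn_gt0. Qed.

Section Graphs.
Variable n : nat.
Implicit Types (E R Y : {set {set 'I_n}}) (x y v : 'I_n) (B S U V : {set 'I_n}).

Definition pairs : {set {set 'I_n}} := [set e : {set 'I_n} | #|e| == 2].

Lemma graphs_powerset : graphs n = powerset pairs.
Proof.
apply/setP => E; rewrite !inE /is_graph; apply/forall_inP/subsetP.
  by move=> E2 e eE; rewrite inE E2.
by move=> EP e /EP; rewrite inE.
Qed.

Lemma set2_inj x y z : [set x; y] = [set x; z] -> y = z.
Proof.
move=> xyz; have : y \in [set x; z] by rewrite -xyz set22.
case/set2P => // yx; subst y.
have : z \in [set x; x] by rewrite xyz set22.
by case/set2P => ->.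
Qed.

Lemma adjC E x y : adj E x y = adj E y x.
Proof. by rewrite /adj setUC. Qed.

Lemma adj_setD E (K : {set {set 'I_n}}) y x : [set y; x] \notin K ->
  adj (E :\: K) y x = adj E y x.
Proof. by move=> yxK; rewrite /adj inE yxK. Qed.

Lemma adj_setU E (K : {set {set 'I_n}}) y x :
  adj (E :|: K) y x = adj E y x || ([set y; x] \in K).
Proof. by rewrite /adj inE. Qed.

Definition common E V := [set y | [forall x in V, adj E y x]].

Lemma in_theta t E V : (V \in theta t E) = (#|V| == t) && odd #|common E V|.
Proof. by rewrite /theta inE. Qed.

Lemma common_setD E (K : {set {set 'I_n}}) V :
  (forall y x, x \in V -> [set y; x] \notin K) -> common (E :\: K) V = common E V.
Proof.
move=> VK; apply/setP => y; rewrite !inE; apply: eq_forallb_in => x xV.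
by rewrite adj_setD // VK.
Qed.

Lemma in_common_setU1 E v U y :
  (y \in common E (v |: U)) = adj E y v && [forall x in U, adj E y x].
Proof.
rewrite !inE; apply/forall_inP/andP.
  move=> yvU; split; first by apply: yvU; rewrite !inE eqxx.
  by apply/forall_inP => x xU; apply: yvU; rewrite !inE xU orbT.
case=> yv /forall_inP yU x; rewrite !inE => /orP [/eqP -> //|]; exact: yU.
Qed.

Definition star B v := [set [set v; b] | b in B].

Lemma star_sub_pairs B v : v \notin B -> star B v \subset pairs.
Proof.
move=> vB; apply/subsetP => e /imsetP [b bB ->]; rewrite inE cards2.
by have -> // : v != b by apply: contraNneq vB => ->.
Qed.

Lemma notin_star B v x y : x != v -> x \notin B -> [set y; x] \notin star B v.
Proof.
move=> xv xB; apply/imsetP => -[b bB yxvb].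
have : x \in [set v; b] by rewrite -yxvb set22.
by case/set2P => [/eqP|]; [apply/negP | move=> xb; move: xB; rewrite xb bB].
Qed.
Lemma in_star_self B v y : ([set y; v] \in star B v) = (y \in B).
Proof.
apply/imsetP/idP => [[b bB]|yB]; last by exists y; rewrite // setUC.
by rewrite setUC => /set2_inj ->.
Qed.

Lemma adj_setD_star E B v y x : x != v -> x \notin B ->
  adj (E :\: star B v) y x = adj E y x.
Proof. by move=> xv xB; rewrite adj_setD // notin_star. Qed.

Lemma in_binom_sets S U m : (U \in binom_sets S m) = (U \subset S) && (#|U| == m).
Proof. by rewrite /binom_sets !inE. Qed.

Lemma card_binom_sets S m : (#|binom_sets S m| <= 2 ^ #|S|)%N.
Proof.
rewrite -card_powerset; apply: subset_leq_card; apply/subsetP => U.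
by rewrite in_binom_sets inE => /andP [].
Qed.

Definition has_trace E S y U := [forall s in S, adj E y s == (s \in U)].

Definition traces_realized S B m E :=
  [forall U in binom_sets S m, [exists y in B, has_trace E S y U]].

Lemma trace_witnesses S B m E (y0 : 'I_n) : traces_realized S B m E ->
  exists yU : {set 'I_n} -> 'I_n,
    forall U, U \in binom_sets S m -> (yU U \in B) && has_trace E S (yU U) U.
Proof.
move=> realE; exists (fun U => odflt y0 [pick y in B | has_trace E S y U]) => U Um.
case: pickP => [y /andP [-> ->] //|none] /=.
have /exists_inP [y yB traceU] := forall_inP realE U Um.
by move: (none y); rewrite yB traceU.
Qed.

Definition extends t S (T : {set {set 'I_n}}) E v :=
  [forall U in binom_sets S t.-1, ((v |: U) \in theta t E) == (U \in T)].

Definition witness_free t S (T : {set {set 'I_n}}) E :=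
  [forall v, (v \notin S) ==> ~~ extends t S T E v].

Lemma trace_setD_star E S B v y U : y != v -> y \notin B ->
  has_trace (E :\: star B v) S y U = has_trace E S y U.
Proof.
move=> yv yB; apply: eq_forallb_in => s _.
by rewrite adjC adj_setD_star // adjC.
Qed.

Lemma trace_of_star E S y U : [disjoint E & star S y] ->
  has_trace (E :|: star (U :&: S) y) S y U.
Proof.
move=> dE; apply/forall_inP => s sS.
have sE : [set y; s] \notin E.
  by rewrite (disjointFl dE) // setUC in_star_self.
by rewrite adj_setU /adj (negbTE sE) setUC in_star_self inE sS andbT.
Qed.

Section Toggle.
Variables (t : nat) (S : {set 'I_n}) (v : 'I_n) (yU : {set 'I_n} -> 'I_n).
Variable E0 : {set {set 'I_n}}.
Local Notation bs := (binom_sets S t.-1).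
Implicit Types (F T : {set {set 'I_n}}).
Hypotheses (vS : v \notin S) (yU_S : forall U, U \in bs -> yU U \notin S)
  (yU_trace : forall U, U \in bs -> has_trace E0 S (yU U) U)
  (yU_v : forall U, U \in bs -> ~~ adj E0 (yU U) v).

Definition toggles (F : {set {set 'I_n}}) := star [set yU U | U in F] v.

Lemma common_toggle F U : F \subset bs -> U \in bs ->
  common (E0 :|: toggles F) (v |: U) =
  if U \in F then yU U |: common E0 (v |: U) else common E0 (v |: U).
Proof.
move=> sFbs Ubs; move: (Ubs); rewrite in_binom_sets => /andP [sUS /eqP cardU].
have adj_S y x : x \in S -> adj (E0 :|: toggles F) y x = adj E0 y x.
  move=> xS; rewrite adj_setU; have /negbTE -> : [set y; x] \notin toggles F.
    apply: notin_star; first by apply: contraNneq vS => <-.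
    by apply/imsetP => -[U' /(subsetP sFbs) /yU_S yS xU']; rewrite -xU' xS in yS.
  by rewrite orbF.
have yU_in y : (y \in [set yU U' | U' in F]) && [forall x in U, adj E0 y x] =
               (U \in F) && (y == yU U).
  apply/andP/andP => [[/imsetP [U' U'F ->] /forall_inP adjU]|[UF /eqP ->]].
    have U'bs := subsetP sFbs U' U'F.
    have /forall_inP traceU' := yU_trace U'bs.
    have sUU' : U \subset U'.
      by apply/subsetP => x xU; rewrite -(eqP (traceU' x (subsetP sUS x xU))) adjU.
    have -> : U = U'.
      apply/eqP; rewrite eqEcard sUU' cardU /=.
      by move: U'bs; rewrite in_binom_sets => /andP [_ /eqP ->].
    by rewrite U'F.
  split; first exact: imset_f.
  have /forall_inP traceU := yU_trace Ubs.
  by apply/forall_inP => x xU; rewrite (eqP (traceU x (subsetP sUS x xU))).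
apply/setP => y; rewrite in_common_setU1 adj_setU in_star_self.
have -> : [forall x in U, adj (E0 :|: toggles F) y x] = [forall x in U, adj E0 y x].
  by apply: eq_forallb_in => x xU; rewrite adj_S // (subsetP sUS).
rewrite andb_orl yU_in -in_common_setU1.
by case: ifP => UF; rewrite ?inE ?orbF // orbC.
Qed.

Lemma toggle_extends T : (0 < t)%N ->
  exists2 F : {set {set 'I_n}}, F \subset bs & extends t S T (E0 :|: toggles F) v.
Proof.
move=> t_gt0.
set F := [set U in bs | odd #|common E0 (v |: U)| != (U \in T)].
have sFbs : F \subset bs by apply/subsetP => U; rewrite inE => /andP [].
exists F => //; apply/forall_inP => U Ubs.
move: (Ubs); rewrite in_binom_sets => /andP [sUS /eqP cardU].
have vU : v \notin U by apply: contra vS => /(subsetP sUS).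
have cardvU : #|v |: U| = t by rewrite cardsU1 vU cardU add1n prednK.
have yU_out : yU U \notin common E0 (v |: U).
  by rewrite in_common_setU1 (negbTE (yU_v Ubs)).
rewrite in_theta cardvU eqxx common_toggle // [U \in F]inE Ubs /=.
by case: ifP; rewrite ?cardsU1 ?yU_out /=; case: (odd _); case: (U \in T).
Qed.

End Toggle.

(* With |S| = k, the probability that U is the trace on S of no vertex of B
   (a set disjoint from S) is at most qk k ^ |B|: the traces of distinct
   vertices are decided by disjoint stars of edges. *)
Lemma trace_missing_bound k S U B : #|S| = k -> [disjoint B & S] ->
  #|[set E in powerset pairs | all (fun y => ~~ has_trace E S y U) (enum B)]|%:R
    <= qk k ^+ #|B| * 2 ^+ #|pairs|.
Proof.
move=> cardS dBS; rewrite (cardE B).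
have yS y : y \in enum B -> y \notin S by rewrite mem_enum => /(disjointFr dBS) ->.
apply: (independent_blocks_bound (J := star S) (F := fun y E => ~~ has_trace E S y U)).
- exact: qk_ge0.
- exact: enum_uniq.
- by move=> y /yS; apply: star_sub_pairs.
- by move=> y y' /yS yS' _ yy' E; rewrite trace_setD_star.
move=> y /yS yS' R sR.
apply: le_trans (ler_wpM2r (exprn_ge0 _ (ler0n _ 2)) (qk_mono (w := #|star S y|) _)).
  apply: escapable_density => // R' sR'; exists (star (U :&: S) y).
  rewrite (imsetS _ (subsetIr _ _)) /= negbK setUA trace_of_star //.
  rewrite disjoints_subset; apply/subsetP => e.
  rewrite inE => /orP [/(subsetP sR)|/(subsetP sR')].
    by rewrite !inE => /andP [].
  by rewrite setDv inE.
by apply: leq_trans (leq_imset_card _ _) _; rewrite cardS ltnW // ltn_expl.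
Qed.

(* Fix S with |S| = k, a pattern T, and disjoint sets A, B outside S.  The
   vertices of A are the candidate witnesses, those of B realise traces. *)
Section Witnesses.
Variables (k t : nat) (S : {set 'I_n}) (T : {set {set 'I_n}}) (A B : {set 'I_n}).
Hypotheses (t_gt0 : (0 < t)%N) (cardS : #|S| = k)
  (dAS : [disjoint A & S]) (dAB : [disjoint A & B]) (dBS : [disjoint B & S]).
Local Notation bs := (binom_sets S t.-1).

Lemma notin_S x : x \in A :|: B -> x \notin S.
Proof. by case/setUP => [/(disjointFr dAS)|/(disjointFr dBS)] ->. Qed.

Lemma realized_setD_star w E : w \in A ->
  traces_realized S B t.-1 E = traces_realized S B t.-1 (E :\: star B w).
Proof.
move=> wA; apply: eq_forallb_in => U _; apply: eq_existsb_in => y yB.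
apply: eq_forallb_in => s sS; rewrite adj_setD_star ?(disjointFl dBS sS) //.
by apply: contraTneq sS => ->; rewrite notin_S // inE wA.
Qed.

Lemma extends_setD_star v w E : v \in A -> w \in A -> v != w ->
  extends t S T E v = extends t S T (E :\: star B w) v.
Proof.
move=> vA wA vw; apply: eq_forallb_in => U; rewrite in_binom_sets => /andP [sUS _].
rewrite !in_theta common_setD // => y x; rewrite !inE => /orP [/eqP ->|xU].
  by rewrite notin_star ?(disjointFr dAB vA).
have xS := subsetP sUS x xU.
rewrite notin_star ?(disjointFl dBS xS) //.
by apply: contraTneq xS => ->; rewrite notin_S // inE wA.
Qed.

Lemma star_A_sub_pairs v : v \in A -> star B v \subset pairs.
Proof. by move=> vA; apply: star_sub_pairs; rewrite (disjointFr dAB vA). Qed.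

Lemma witness_escape v R : v \in A -> R \subset pairs :\: star B v ->
  traces_realized S B t.-1 R ->
  exists2 W : {set {set 'I_n}}, (W \subset star B v) && (#|W| <= 2 ^ k)%N &
    forall R', R' \subset star B v :\: W ->
      exists Y : {set {set 'I_n}}, (Y \subset W) && extends t S T (R :|: (R' :|: Y)) v.
Proof.
move=> vA sR realR.
have [yU yU_spec] := trace_witnesses v realR.
have yUB U : U \in bs -> yU U \in B by move=> /yU_spec /andP [].
have sWstar : toggles v yU bs \subset star B v.
  by apply: imsetS; apply/subsetP => y /imsetP [U /yUB yB ->].
exists (toggles v yU bs).
  rewrite sWstar; apply: leq_trans (leq_imset_card _ _) _.
  by apply: leq_trans (leq_imset_card _ _) _; rewrite -cardS card_binom_sets.
move=> R' sR'.
have vS : v \notin S by rewrite notin_S // inE vA.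
have R'_star : R' \subset star B v by apply: subset_trans sR' (subsetDl _ _).
have adjR' (y s : 'I_n) : s \in S -> adj (R :|: R') y s = adj R y s.
  move=> sS; rewrite adj_setU; suff /negbTE -> : [set y; s] \notin R' by rewrite orbF.
  apply/negP => /(subsetP R'_star); apply/negP.
  by rewrite notin_star ?(disjointFl dBS sS) //; apply: contraTneq sS => ->.
have yU_v U : U \in bs -> ~~ adj (R :|: R') (yU U) v.
  move=> Ubs; have yUW : [set yU U; v] \in toggles v yU bs.
    by rewrite in_star_self imset_f.
  rewrite adj_setU negb_or; apply/andP; split.
    by apply: contraL (subsetP sWstar _ yUW) => /(subsetP sR); rewrite inE => /andP [].
  by apply: contraL yUW => /(subsetP sR'); rewrite inE => /andP [].
have yU_trace U : U \in bs -> has_trace (R :|: R') S (yU U) U.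
  move=> /yU_spec /andP [_ traceU]; apply/forall_inP => x xS.
  by rewrite adjR' //; apply: (forall_inP traceU).
have yU_S U : U \in bs -> yU U \notin S.
  by move=> /yUB yB; rewrite notin_S // inE yB orbT.
have [F sF extF] := toggle_extends vS yU_S yU_trace yU_v T t_gt0.
exists (toggles v yU F); rewrite setUA extF andbT.
by apply: imsetS; apply: imsetS.
Qed.

Lemma extension_block_density v : v \in A ->
  block_density_le pairs (star B v)
    (fun E => ~~ extends t S T E v && traces_realized S B t.-1 E) (qk k).
Proof.
move=> vA R sR.
have realRY Y : Y \subset star B v ->
    traces_realized S B t.-1 (R :|: Y) = traces_realized S B t.-1 R.
  by move=> sY; rewrite (realized_setD_star _ vA) (setU_setD_block sR sY).
have [realR|unrealR] := boolP (traces_realized S B t.-1 R); last first.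
  rewrite (_ : [set Y in powerset _ | _] = set0);
    first by rewrite cards0 mulr_ge0 ?qk_ge0 ?exprn_ge0.
  apply/setP => Y; rewrite !inE; apply/negbTE/negP => /andP [sY /andP [_]].
  by rewrite realRY // (negbTE unrealR).
have [W /andP [sW cardW] escape] := witness_escape vA sR realR.
apply: le_trans (ler_wpM2r (exprn_ge0 _ (ler0n _ 2)) (qk_mono cardW)).
apply: escapable_density => // R' sR'.
have [Y /andP [sYW extY]] := escape R' sR'.
by exists Y; rewrite sYW extY.
Qed.

Lemma candidates_fail_bound :
  #|[set E in powerset pairs |
     all (fun v => ~~ extends t S T E v && traces_realized S B t.-1 E) (enum A)]|%:R
    <= qk k ^+ #|A| * 2 ^+ #|pairs|.
Proof.
rewrite (cardE A).
apply: (independent_blocks_bound (J := star B)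
  (F := fun v E => ~~ extends t S T E v && traces_realized S B t.-1 E)).
- exact: qk_ge0.
- exact: enum_uniq.
- by move=> v; rewrite mem_enum; apply: star_A_sub_pairs.
- move=> v w; rewrite !mem_enum => vA wA vw E.
  by rewrite -(extends_setD_star _ vA wA vw) -realized_setD_star.
by move=> v; rewrite mem_enum; apply: extension_block_density.
Qed.

Lemma unrealized_bound :
  #|[set E in powerset pairs | ~~ traces_realized S B t.-1 E]|%:R
    <= (2 ^ k)%:R * qk k ^+ #|B| * 2 ^+ #|pairs|.
Proof.
apply: le_trans (_ : (\sum_(U | U \in bs)
    #|[set E in powerset pairs | all (fun y => ~~ has_trace E S y U) (enum B)]|)%:R
      <= _).
  rewrite ler_nat; apply: union_bound => E _ /forall_inPn [U Ubs /exists_inPn noU].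
  by exists U; rewrite Ubs /=; apply/allP => y; rewrite mem_enum => /noU.
rewrite natr_sum.
apply: le_trans (_ : \sum_(U | U \in bs) qk k ^+ #|B| * 2 ^+ #|pairs| <= _).
  by apply: ler_sum => U _; apply: trace_missing_bound.
rewrite sumr_const -[X in X <= _]mulr_natl mulrA ler_wpM2r ?exprn_ge0 //.
rewrite ler_wpM2r ?exprn_ge0 ?qk_ge0 //.
by rewrite ler_nat -cardS card_binom_sets.
Qed.

Lemma witness_free_card :
  #|[set E in powerset pairs | witness_free t S T E]|%:R
    <= (qk k ^+ #|A| + (2 ^ k)%:R * qk k ^+ #|B|) * 2 ^+ #|pairs|.
Proof.
set X1 := [set E in powerset pairs |
  all (fun v => ~~ extends t S T E v && traces_realized S B t.-1 E) (enum A)].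
set X2 := [set E in powerset pairs | ~~ traces_realized S B t.-1 E].
have sub : [set E in powerset pairs | witness_free t S T E] \subset X1 :|: X2.
  apply/subsetP => E; rewrite inE => /andP [EP /forallP noext].
  rewrite inE [E \in X1]inE [E \in X2]inE EP /=.
  have [realE|] := boolP (traces_realized S B t.-1 E); last by rewrite orbT.
  apply/orP; left; apply/allP => v; rewrite mem_enum => vA /=; rewrite andbT.
  by apply: (implyP (noext v)); rewrite notin_S // inE vA.
apply: le_trans (_ : (#|X1| + #|X2|)%:R <= _).
  by rewrite ler_nat; apply: leq_trans (subset_leq_card sub) (leq_card_setU _ _).
by rewrite natrD mulrDl lerD ?candidates_fail_bound ?unrealized_bound.
Qed.

End Witnesses.

Lemma witness_free_bound k t S T : (0 < t)%N -> #|S| = k ->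
  #|[set E in powerset pairs | witness_free t S T E]|%:R
    <= (1 + (2 ^ k)%:R) * qk k ^+ (n - k)./2 * 2 ^+ #|pairs|.
Proof.
move=> t_gt0 cardS.
have [A [B [sA sB dAB hA hB]]] := halve_set (~: S).
have cardCS : #|~: S| = (n - k)%N.
  by have := cardsC S; rewrite card_ord cardS; lia.
rewrite cardCS in hA hB.
have dAS : [disjoint A & S] by rewrite disjoints_subset.
have dBS : [disjoint B & S] by rewrite disjoints_subset.
apply: le_trans (witness_free_card T t_gt0 cardS dAS dAB dBS) _.
have qX m : ((n - k)./2 <= m)%N -> qk k ^+ m <= qk k ^+ (n - k)./2.
  by move=> hm; rewrite ler_wiXn2l ?qk_ge0 ?(ltW (qk_lt1 k)).
rewrite ler_wpM2r ?exprn_ge0 // mulrDl mul1r lerD ?qX //.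
by rewrite ler_wpM2l ?ler0n ?qX.
Qed.

Lemma not_EA_witness_free k t E : ~~ EA t k (theta t E) ->
  exists S : {set 'I_n}, (#|S| == k) &&
    [exists T : {set {set 'I_n}},
       (T \subset binom_sets S t.-1) && witness_free t S T E].
Proof.
rewrite /EA negb_forall => /existsP [S]; rewrite negb_imply => /andP [cardS].
rewrite negb_forall => /existsP [T]; rewrite negb_imply => /andP [sT].
rewrite negb_exists => /forallP noext.
exists S; rewrite cardS /=; apply/existsP; exists T; rewrite sT /=.
apply/forallP => v; apply/implyP => vS.
by move: (noext v); rewrite negb_and vS.
Qed.

(* Union bound over the k-sets S and the patterns T. *)
Lemma EA_failure_card k t : (0 < t)%N ->
  #|[set E in powerset pairs | ~~ EA t k (theta t E)]|%:R <=
    ('C(n, k) * 2 ^ 2 ^ k)%:R * ((1 + (2 ^ k)%:R) * qk k ^+ (n - k)./2 * 2 ^+ #|pairs|).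
Proof.
move=> t_gt0; set c := (1 + (2 ^ k)%:R) * qk k ^+ (n - k)./2 * 2 ^+ #|pairs|.
apply: le_trans (_ : (\sum_(S : {set 'I_n} | #|S| == k)
    \sum_(T : {set {set 'I_n}} | T \subset binom_sets S t.-1)
      #|[set E in powerset pairs | witness_free t S T E]|)%:R <= _).
  rewrite ler_nat; apply: leq_trans (union_bound (A := powerset pairs)
    (Q := fun S E => [exists T : {set {set 'I_n}},
                        (T \subset binom_sets S t.-1) && witness_free t S T E])
    (fun E _ => @not_EA_witness_free k t E)) _.
  apply: leq_sum => S _; apply: union_bound => E _ /existsP [T /andP [sT freeT]].
  by exists T; rewrite sT.
have card_patterns S : #|S| = k ->
    (#|[pred T : {set {set 'I_n}} | T \subset binom_sets S t.-1]| <= 2 ^ 2 ^ k)%N.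
  move=> cardS; have -> : #|[pred T : {set {set 'I_n}} | T \subset binom_sets S t.-1]| =
                          #|powerset (binom_sets S t.-1)|.
    by apply: eq_card => T; rewrite !inE.
  by rewrite card_powerset leq_pexp2l // -cardS card_binom_sets.
rewrite natr_sum.
apply: le_trans (_ : \sum_(S : {set 'I_n} | #|S| == k) (2 ^ 2 ^ k)%:R * c <= _).
  apply: ler_sum => S /eqP cardS; rewrite natr_sum.
  apply: le_trans
    (_ : \sum_(T : {set {set 'I_n}} | T \subset binom_sets S t.-1) c <= _).
    by apply: ler_sum => T _; apply: witness_free_bound.
  rewrite sumr_const mulr_natl ler_wpMn2l ?card_patterns //.
  by rewrite !mulr_ge0 ?exprn_ge0 ?qk_ge0 // addr_ge0 ?ler0n.
rewrite sumr_const (_ : #|[pred S : {set 'I_n} | #|S| == k]| = 'C(n, k)).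
  by rewrite -(mulr_natl ((2 ^ 2 ^ k)%:R * c)) mulrA natrM.
by rewrite -cardsE card_draws card_ord.
Qed.

End Graphs.

Lemma fail_prob_le n k t : (0 < t)%N ->
  fail_prob t k n
    <= ('C(n, k) * 2 ^ 2 ^ k)%:R * ((1 + (2 ^ k)%:R) * qk k ^+ (n - k)./2).
Proof.
move=> t_gt0; rewrite /fail_prob graphs_powerset card_powerset.
rewrite ler_pdivrMr ?ltr0n ?expn_gt0 // -mulrA.
by apply: le_trans (@EA_failure_card n k t t_gt0) _; rewrite -natrX.
Qed.

Lemma bernoulli (e : rat) (m : nat) : 0 <= e -> 1 + m%:R * e <= (1 + e) ^+ m.
Proof.
move=> e0; elim: m => [|m IH]; first by rewrite mul0r addr0 expr0.
rewrite exprS; apply: le_trans (_ : (1 + e) * (1 + m%:R * e) <= _); last first.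
  by rewrite ler_wpM2l // addr_ge0.
rewrite -natr1; have m0 : 0 <= (m%:R : rat) by rewrite ler0n.
have := mulr_ge0 (mulr_ge0 m0 e0) e0; nra.
Qed.

(* With b = a + 1, m = j / b and X = 1 + m e:
   K (j + 1)^a <= K (b / e)^a X^a < X^b <= (1 + e)^(b m) <= (1 + e)^j
   as soon as X exceeds the constant K (b / e)^a. *)
Lemma poly_lt_exp_small (e K : rat) (a : nat) : 0 < e -> e <= 1 -> 0 <= K ->
  exists N, forall j, (N <= j)%N -> K * j.+1%:R ^+ a < (1 + e) ^+ j.
Proof.
move=> e0 e1 K0.
set b := a.+1; set C := K * (b%:R / e) ^+ a.
have [M CM] : exists M : nat, C / e < M%:R.
  exists (Num.bound `|C / e|).
  exact: le_lt_trans (ler_norm _) (archi_boundP (normr_ge0 _)).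
exists (b * M)%N => j jN; set m := (j %/ b)%N; set X := 1 + m%:R * e.
have m0 : 0 <= (m%:R : rat) by rewrite ler0n.
have C_lt_X : C < X.
  have Mm : (M <= m)%N by rewrite /m leq_divRL // mulnC.
  have : C < m%:R * e.
    by rewrite -ltr_pdivrMr //; apply: lt_le_trans CM _; rewrite ler_nat.
  by move/lt_le_trans; apply; rewrite /X lerDr ler01.
have X_gt0 : 0 < X by rewrite /X (lt_le_trans ltr01) // lerDl mulr_ge0 // ltW.
have j_le : j.+1%:R <= b%:R / e * X.
  have : (j.+1 <= m.+1 * b)%N by apply: ltn_ceil.
  rewrite -(ler_nat rat) natrM => /le_trans; apply.
  by rewrite mulrC -mulrA ler_wpM2l ?ler0n // -natr1 ler_pdivlMl // /X; nra.
have X_exp : X ^+ b <= (1 + e) ^+ j.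
  apply: le_trans (_ : ((1 + e) ^+ m) ^+ b <= _).
    apply: lerXn2r; last exact: bernoulli (ltW e0).
      by rewrite nnegrE ltW.
    by rewrite nnegrE exprn_ge0 // addr_ge0 // ltW.
  by rewrite -exprM ler_weXn2l ?lerDl ?ltW // leq_divM.
apply: le_lt_trans (_ : _ <= C * X ^+ a) _.
  rewrite /C -mulrA ler_wpM2l // -exprMn lerXn2r ?nnegrE ?ler0n //.
  by rewrite mulr_ge0 ?divr_ge0 ?ler0n ?ltW.
apply: lt_le_trans X_exp; rewrite exprS ltr_pM2r ?exprn_gt0 //.
Qed.

(* For 0 < e, the exponential (1 + e)^j eventually exceeds K (j + 1)^a:
   shrinking e to min e 1 and K to |K| reduces to poly_lt_exp_small. *)
Lemma poly_lt_exp (e K : rat) (a : nat) : 0 < e ->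
  exists N, forall j, (N <= j)%N -> K * j.+1%:R ^+ a < (1 + e) ^+ j.
Proof.
move=> e0; set e' := Order.min e 1.
have e'0 : 0 < e' by rewrite lt_min e0 ltr01.
have e'1 : e' <= 1 by rewrite ge_min lexx orbT.
have [N HN] := poly_lt_exp_small a e'0 e'1 (normr_ge0 K).
exists N => j /HN lt_e'; apply: le_lt_trans (_ : _ <= `|K| * j.+1%:R ^+ a) _.
  by rewrite ler_wpM2r ?exprn_ge0 ?ler0n ?ler_norm.
apply: (lt_le_trans lt_e'); apply: lerXn2r.
- by rewrite nnegrE addr_ge0 // le_min ler01 ltW.
- by rewrite nnegrE addr_ge0 ?ltW.
- by rewrite lerD2l ge_min lexx.
Qed.

Lemma poly_geometric_small (K q : rat) (a : nat) : 0 < q < 1 ->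
  exists N, forall j, (N <= j)%N -> K * j.+1%:R ^+ a * q ^+ j < 1.
Proof.
case/andP=> q0 q1.
have e0 : 0 < q^-1 - 1 by rewrite subr_gt0 invf_gt1.
have [N HN] := poly_lt_exp K a e0.
exists N => j /HN; rewrite addrC subrK exprVn => lt_inv.
by rewrite -ltr_pdivlMr ?exprn_gt0 // div1r.
Qed.

Lemma poly_le_monomial (p : {poly rat}) : exists2 P : rat, 0 <= P &
  forall x : rat, 1 <= x -> p.[x] <= P * x ^+ size p.
Proof.
exists (\sum_(i < size p) `|p`_i|); first by apply: sumr_ge0 => i _.
move=> x x1; rewrite horner_coef mulr_suml; apply: ler_sum => i _.
have x0 : 0 <= x by apply: le_trans x1.
apply: le_trans (ler_norm _) _; rewrite normrM ler_wpM2l // normrX ger0_norm //.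
exact: ler_weXn2l (ltnW (ltn_ord i)).
Qed.

Lemma negligibleP (f : nat -> rat) :
  (forall (P : rat) (d : nat), 0 <= P ->
     exists N, forall n, (N <= n)%N -> f n * (P * n%:R ^+ d) < 1) ->
  negligible f.
Proof.
move=> small p [N0 p_pos].
have [P P0 p_le] := poly_le_monomial p.
have [N1 fP_lt1] := small P (size p) P0.
exists (maxn 1 (maxn N0 N1)) => n; rewrite !geq_max => /and3P [n1 nN0 nN1].
have pn := p_pos n nN0; rewrite -[_^-1]mul1r ltr_pdivlMr //.
have [f0|fneg] := leP 0 (f n); last first.
  by apply: lt_trans ltr01; rewrite pmulr_llt0.
apply: le_lt_trans _ (fP_lt1 n nN1); rewrite ler_wpM2l // p_le //.
by rewrite ler1n.
Qed.

Lemma binomial_le_exp n k : ('C(n, k) <= n ^ k)%N.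
Proof.
apply: leq_trans (_ : n ^_ k <= _)%N.
  by rewrite -bin_ffact leq_pmulr // fact_gt0.
rewrite ffact_prod; apply: leq_trans (leq_prod (fun (i : 'I_k) _ => leq_subr i n)) _.
by rewrite prod_nat_const card_ord.
Qed.

(* Polynomial growth times geometric decay at half speed is eventually
   below 1: with h = (n - k)/2 we have n <= (k + 2)(h + 1). *)
Lemma poly_half_geometric_small (K q : rat) (a k : nat) : 0 <= K -> 0 < q < 1 ->
  exists N, forall n, (N <= n)%N -> K * n%:R ^+ a * q ^+ (n - k)./2 < 1.
Proof.
move=> K0 q01.
have [N HN] := poly_geometric_small (K * (k + 2)%:R ^+ a) a q01.
exists (N.*2 + k)%N => n nN; set h := (n - k)./2.
have hN : (N <= h)%N by rewrite /h geq_half_double -addnn in nN *; lia.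
have n_le : (n <= (k + 2) * h.+1)%N.
  have : (n - k <= h.*2.+1)%N by rewrite -leq_half_double.
  by rewrite -addnn; nia.
apply: le_lt_trans _ (HN h hN); apply: ler_wpM2r.
  by case/andP: q01 => q0 _; rewrite exprn_ge0 // ltW.
rewrite -mulrA -exprMn -natrM; apply: ler_wpM2l => //.
by apply: lerXn2r; rewrite ?nnegrE ?ler0n ?ler_nat.
Qed.

Lemma fail_prob_poly_le n k t : (0 < t)%N ->
  fail_prob t k n
    <= (2 ^ 2 ^ k)%:R * (1 + (2 ^ k)%:R) * n%:R ^+ k * qk k ^+ (n - k)./2.
Proof.
move=> t_gt0; apply: le_trans (fail_prob_le n k t_gt0) _.
set c := (2 ^ 2 ^ k)%:R * (1 + (2 ^ k)%:R) * qk k ^+ (n - k)./2.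
have c0 : 0 <= c by rewrite !mulr_ge0 ?exprn_ge0 ?qk_ge0 // addr_ge0.
have -> : ('C(n, k) * 2 ^ 2 ^ k)%:R * ((1 + (2 ^ k)%:R) * qk k ^+ (n - k)./2)
          = c * 'C(n, k)%:R :> rat by rewrite /c natrM; ring.
have -> : (2 ^ 2 ^ k)%:R * (1 + (2 ^ k)%:R) * n%:R ^+ k * qk k ^+ (n - k)./2
          = c * n%:R ^+ k :> rat by rewrite /c; ring.
by apply: ler_wpM2l => //; rewrite -natrX ler_nat binomial_le_exp.
Qed.

Theorem mainTheorem15 (k t : nat) (hk : (1 <= k)%N) (ht : (2 <= t)%N) :
  negligible (fail_prob t k).
Proof.
have t_gt0 : (0 < t)%N by apply: leq_trans ht.
apply: negligibleP => P d P0.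
set C := (2 ^ 2 ^ k)%:R * (1 + (2 ^ k)%:R) : rat.
have C0 : 0 <= C by rewrite mulr_ge0 ?addr_ge0.
have q01 : 0 < qk k < 1 by rewrite qk_gt0 qk_lt1.
have [N HN] := poly_half_geometric_small (k + d) k (mulr_ge0 C0 P0) q01.
exists N => n /HN; apply: le_lt_trans.
apply: le_trans (_ : C * n%:R ^+ k * qk k ^+ (n - k)./2 * (P * n%:R ^+ d) <= _).
  by apply: ler_wpM2r; rewrite ?mulr_ge0 ?exprn_ge0 ?ler0n ?fail_prob_poly_le.
by rewrite exprD le_eqVlt; apply/orP; left; apply/eqP; ring.
Qed.
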